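(* Let $(M,\Sigma)$ be a measurable space, $r\ge1$, and $\mu_1,\dots,\mu_r$ non-atomic countably additive finite measures on $\Sigma$. For $k\ge1$ let $t(k)=k\bmod r$ if this is nonzero and $t(k)=r$ otherwise. Let $(H_k)_{k\ge1}$ be a sequence of measurable sets such that for every $k$: $H_k\subseteq M\setminus\bigcup_{i=1}^{k-1}H_i$, $H_k$ admits a strong solution (a partition $H_k=F_1\sqcup\dots\sqcup F_r$ with $\mu_i(F_i)\ge\mu_i(F_j)$ for all $i,j$), and $\mu_{t(k)}(H_k)\ge 2^{-(r-1)}\mu_{t(k)}\bigl(M\setminus\bigcup_{i=1}^{k-1}H_i\bigr)$. Let $M_\infty=M\setminus\bigcup_{i=1}^\infty H_i$. Then $\mu_j(M_\infty)=0$ for every $j\in\{1,\dots,r\}$. *)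

From HB Require Import structures.
From mathcomp Require Import all_boot all_order all_algebra.
From mathcomp Require Import all_classical all_reals all_analysis.
Set Implicit Arguments. Unset Strict Implicit. Unset Printing Implicit Defensive.
Import Order.TTheory GRing.Theory Num.Theory.
Local Open Scope classical_set_scope.
Local Open Scope ring_scope.

Definition nonatomic d (T : measurableType d) (R : realType)
  (mu : set T -> \bar R) : Prop :=
  forall A, measurable A -> (0 < mu A)%E ->
    exists2 B, measurable B /\ B `<=` A & (0 < mu B)%E /\ (mu B < mu A)%E.

Definition strong_solution d (T : measurableType d) (R : realType) (r : nat)
  (mu : nat -> set T -> \bar R) (H : set T) : Prop :=
  exists F : nat -> set T,
    [/\ (forall i, (1 <= i <= r)%N -> measurable (F i)),
        (forall i j, (1 <= i <= r)%N -> (1 <= j <= r)%N -> i != j ->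
            F i `&` F j = set0),
        H = \bigcup_(i in [set i | (1 <= i <= r)%N]) F i &
        (forall i j, (1 <= i <= r)%N -> (1 <= j <= r)%N ->
            (mu i (F j) <= mu i (F i))%E)].

Definition tidx (r k : nat) : nat := if (k %% r)%N != 0%N then (k %% r)%N else r.

Definition remaining (T : Type) (H : nat -> set T) (k : nat) : set T :=
  ~` (\bigcup_(i in [set i | (1 <= i < k)%N]) H i).

From HB Require Import structures.
From mathcomp Require Import all_boot all_order all_algebra.
From mathcomp Require Import all_classical all_reals all_analysis.
Import Order.TTheory GRing.Theory Num.Theory.
Local Open Scope classical_set_scope.
Local Open Scope ring_scope.

(* The sets H_k are pairwise disjoint and every r-th of them, H_(j + n r),
   carries a fixed fraction c of mu_j(M \ (H_1 ∪ ... ∪ H_(j+nr-1))), which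
   is at least mu_j(M_oo). Hence mu_j of H_1 ∪ ... ∪ H_(j+nr-1) is at least
   n c mu_j(M_oo), which is impossible for a finite measure unless
   mu_j(M_oo) = 0. Non-atomicity and the strong solutions are needed only to
   construct such a sequence; the conclusion does not use them. *)

Lemma tidx_addMn r j n : (1 <= j <= r)%N -> tidx r (j + n * r) = j.
Proof.
move=> /andP[j_gt0 j_le_r]; rewrite /tidx addnC modnMDl.
move: j_le_r; rewrite leq_eqVlt => /orP[/eqP ->|j_lt_r]; first by rewrite modnn.
by rewrite modn_small // -lt0n j_gt0.
Qed.

Lemma natmul_bounded_le0 (R : archiRealFieldType) (e b : R) :
  (forall n : nat, e *+ n <= b) -> e <= 0.
Proof.
move=> e_bounded; rewrite leNgt; apply/negP => e_gt0.
have b_ge0 : 0 <= b by have := e_bounded 0%N; rewrite mulr0n.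
have := archi_boundP (divr_ge0 b_ge0 (ltW e_gt0)).
rewrite ltr_pdivrMr // mulr_natl => b_lt.
by have := lt_le_trans b_lt (e_bounded _); rewrite ltxx.
Qed.

Definition covered {T : Type} (H : nat -> set T) (N : nat) : set T :=
  \bigcup_(i in [set i | (1 <= i < N)%N]) H i.

Lemma remainingE {T : Type} (H : nat -> set T) N :
  remaining H N = ~` covered H N.
Proof. by []. Qed.

Section pairwise_disjoint_sequence.
Context {d : measure_display} {T : measurableType d} {R : realType}.
Context {H : nat -> set T}.
Hypothesis measurable_H : forall k, (1 <= k)%N -> measurable (H k).
Hypothesis H_sub_remaining : forall k, (1 <= k)%N -> H k `<=` remaining H k.

Lemma measurable_covered N : measurable (covered H N).
Proof.
by apply: bigcup_measurable => k /= /andP[k_gt0 _]; exact: measurable_H.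
Qed.

Lemma subset_covered N N' : (N <= N')%N -> covered H N `<=` covered H N'.
Proof.
move=> le_NN' x [i /= /andP[i_gt0 i_lt_N] Hix]; exists i => //=.
by rewrite i_gt0 (leq_trans i_lt_N le_NN').
Qed.

Lemma coveredS N : (1 <= N)%N -> covered H N.+1 = covered H N `|` H N.
Proof.
move=> N_gt0; apply/seteqP; split => x.
  move=> [i /= /andP[i_gt0]]; rewrite ltnS leq_eqVlt.
  move=> /orP[/eqP -> | i_lt_N] Hix.
    by right.
  by left; exists i => //=; rewrite i_gt0.
case=> [[i /= /andP[i_gt0 i_lt_N] Hix] | HNx].
  by exists i => //=; rewrite i_gt0 ltnW.
by exists N => //=; rewrite N_gt0 /=.
Qed.

Lemma measure_coveredS (mu : {measure set T -> \bar R}) N : (1 <= N)%N ->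
  mu (covered H N.+1) = (mu (covered H N) + mu (H N))%E.
Proof.
move=> N_gt0; rewrite coveredS //.
apply: measureU; [exact: measurable_covered | exact: measurable_H |].
rewrite setIC; apply/disjoints_subset; rewrite -remainingE.
exact: H_sub_remaining.
Qed.

Lemma measure_covered_progression (mu : {measure set T -> \bar R}) k s (e : R) :
  (1 <= k)%N -> (1 <= s)%N ->
  (forall n, e%:E <= mu (H (k + n * s)))%E ->
  forall n, ((e *+ n)%:E <= mu (covered H (k + n * s)))%E.
Proof.
move=> k_gt0 s_gt0 e_le n; elim: n => [|n IHn]; first by rewrite mulr0n.
have kn_gt0 : (1 <= k + n * s)%N by rewrite (leq_trans k_gt0) ?leq_addr.
have next_le : ((k + n * s).+1 <= k + n.+1 * s)%N.
  by rewrite mulSn addnCA -[X in (X < _)%N]add0n ltn_add2r.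
apply: (@le_trans _ _ (mu (covered H (k + n * s).+1))); last first.
  by apply: le_measure (subset_covered _ _ next_le); rewrite inE;
    exact: measurable_covered.
by rewrite measure_coveredS // mulrSr EFinD leeD.
Qed.

Lemma measure_uncovered_eq0 (mu : {finite_measure set T -> \bar R})
    k s (c : R) : (1 <= k)%N -> (1 <= s)%N -> 0 < c ->
  (forall n, c%:E * mu (remaining H (k + n * s)) <= mu (H (k + n * s)))%E ->
  mu (~` \bigcup_(i in [set i | (1 <= i)%N]) H i) = 0%E.
Proof.
move=> k_gt0 s_gt0 c_gt0 H_large.
set Moo := ~` _.
have measurable_Moo : measurable Moo.
  by apply: measurableC; apply: bigcup_measurable => i /=; exact: measurable_H.
have Moo_sub N : Moo `<=` remaining H N.
  by move=> x Moo_x [i /= /andP[i_gt0 _] Hix]; apply: Moo_x; exists i.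
have MooE : mu Moo = (fine (mu Moo))%:E by rewrite fineK ?fin_num_measure.
have fine_Moo_ge0 : 0 <= fine (mu Moo) by rewrite -lee_fin -MooE measure_ge0.
have c_Moo_le n : ((c * fine (mu Moo))%:E <= mu (H (k + n * s)))%E.
  apply: le_trans _ (H_large n); rewrite EFinM -MooE lee_pmul2l ?lte_fin //.
  apply: le_measure (Moo_sub _); rewrite inE // remainingE.
  exact: measurableC (measurable_covered _).
have c_Moo_le0 : c * fine (mu Moo) <= 0.
  apply: (@natmul_bounded_le0 _ _ (fine (mu setT))) => n.
  rewrite -lee_fin fineK ?fin_num_measure //.
  have := measure_covered_progression mu k s _ k_gt0 s_gt0 c_Moo_le n.
  move/le_trans; apply.
  by apply: le_measure; rewrite ?inE //; exact: measurable_covered.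
rewrite MooE; congr (_%:E); apply/eqP; rewrite eq_le fine_Moo_ge0 andbT.
by rewrite -(pmulr_rle0 _ c_gt0).
Qed.

End pairwise_disjoint_sequence.

Theorem corollary3 (d : measure_display) (M : measurableType d) (R : realType)
  (r : nat) (mu : nat -> {finite_measure set M -> \bar R}) (H : nat -> set M) :
  (1 <= r)%N ->
  (forall i, (1 <= i <= r)%N -> nonatomic (mu i)) ->
  (forall k, (1 <= k)%N ->
     [/\ measurable (H k),
         H k `<=` remaining H k,
         strong_solution r (fun i => (mu i : set M -> \bar R)) (H k) &
         (((2%:R : R) ^- r.-1)%:E * mu (tidx r k) (remaining H k)
            <= mu (tidx r k) (H k))%E]) ->
  forall j, (1 <= j <= r)%N ->
    mu j (~` (\bigcup_(i in [set i | (1 <= i)%N]) H i)) = 0%E.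
Proof.
move=> r_gt0 _ hH j j_range; have /andP[j_gt0 _] := j_range.
have measurable_H k : (1 <= k)%N -> measurable (H k) by move=> /hH[].
have H_sub_remaining k : (1 <= k)%N -> H k `<=` remaining H k by move=> /hH[].
apply: (measure_uncovered_eq0 measurable_H H_sub_remaining (mu j) j r
  ((2%:R : R) ^- r.-1) j_gt0 r_gt0); first by rewrite invr_gt0 exprn_gt0.
move=> n; have := hH (j + n * r)%N; rewrite tidx_addMn //.
by case; rewrite ?(leq_trans j_gt0) ?leq_addr.
Qed.
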